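(* Let $T$ be an infinite rooted ordered tree with root $\varnothing$, let $\lambda\in(1,\infty)$ and let $(Y_n)_{n\in\mathbb N}$ be the $\lambda$-biased random walk on $T$ (with arbitrary initial distribution). Assume $Y$ is recurrent. Then for all $\ell,n_1,n_2\in\mathbb N$ with $n_1<n_2$, $$\mathbf P\Big(|Y_{n_1}|+|Y_{n_2}|-2\min_{n_1\le n\le n_2}|Y_n|\ge2\ell+d_{\mathtt{gr}}(Y_{n_1},Y_{n_2})\Big)\le(n_2-n_1)\frac{\lambda-1}{\lambda^\ell-1}.$$
   Context: $\lambda$-biased random walk: from $x\ne\varnothing$ with $k_x(T)$ children, go to the parent w.p. $\lambda/(\lambda+k_x(T))$ and to each child w.p. $1/(\lambda+k_x(T))$; from $\varnothing$ go to each child w.p. $1/k_\varnothing(T)$. $|x|$ is the height of $x$ (graph distance to $\varnothing$), $d_{\mathtt{gr}}$ the graph distance on $T$. *)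

From HB Require Import structures.
From mathcomp Require Import all_boot all_order all_algebra.
From mathcomp Require Import all_classical all_reals all_analysis.
Set Implicit Arguments. Unset Strict Implicit. Unset Printing Implicit Defensive.
Import Order.TTheory GRing.Theory Num.Theory.
Local Open Scope classical_set_scope.
Local Open Scope ring_scope.

(* Ulam--Harris vertices: finite words of natural numbers; the root is [::].
   The i-th child (i = 0,1,...) of u is rcons u i. *)
Definition vertex := seq nat.

(* A rooted ordered (locally finite) tree is encoded by its out-degree
   function c : vertex -> nat; the tree is the set of words all of whose
   letters are below the out-degree of the corresponding prefix.
   (Values of c outside the tree are irrelevant.) *)
Definition in_tree (c : vertex -> nat) (v : vertex) : Prop :=
  forall i, (i < size v)%N -> (nth 0%N v i < c (take i v))%N.

Definition tree_set (c : vertex -> nat) : set vertex := [set v | in_tree c v].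

Definition infinite_tree (c : vertex -> nat) : Prop :=
  ~ finite_set (tree_set c).

Definition parent (x : vertex) : vertex := take (size x).-1 x.

Definition is_child (c : vertex -> nat) (x y : vertex) : bool :=
  [&& size y == (size x).+1, take (size x) y == x & (last 0%N y < c x)%N].

Definition lbrw_p {R : realType} (c : vertex -> nat) (lam : R) (x y : vertex) : R :=
  if x == [::] then (if is_child c x y then (c x)%:R^-1 else 0)
  else if is_child c x y then (lam + (c x)%:R)^-1
  else if y == parent x then lam / (lam + (c x)%:R)
  else 0.

Fixpoint lcp (u v : vertex) : vertex :=
  match u, v with
  | a :: u', b :: v' => if a == b then a :: lcp u' v' else [::]
  | _, _ => [::]
  end.

Definition dgr (u v : vertex) : nat := (size u + size v - 2 * size (lcp u v))%N.

Definition is_lbrw {R : realType} {d : measure_display} {Omega : measurableType d}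
  (P : probability Omega R) (c : vertex -> nat) (lam : R)
  (Y : nat -> Omega -> vertex) : Prop :=
  (forall n x, measurable (Y n @^-1` [set x])) /\
  (forall w, in_tree c (Y 0%N w)) /\
  (forall (x0 : vertex) (xs : seq vertex),
     P [set w : Omega | forall i, (i < (size xs).+1)%N -> Y i w = nth x0 (x0 :: xs) i]
     = (P [set w : Omega | Y 0%N w = x0] *
        (\prod_(i < size xs) lbrw_p c lam (nth x0 (x0 :: xs) i) (nth x0 xs i))%:E)%E).

Definition recurrent {R : realType} {d : measure_display} {Omega : measurableType d}
  (P : probability Omega R) (Y : nat -> Omega -> vertex) : Prop :=
  P [set w : Omega | forall N, exists n, (N <= n)%N /\ Y n w = [::]] = 1%E.

Definition min_height {Omega : Type} (Y : nat -> Omega -> vertex) (n1 n2 : nat)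
  (w : Omega) : nat :=
  \big[minn/size (Y n1 w)]_(n1 <= n < n2.+1) size (Y n w).

(* Let t be the last time in [n1, n2] at which the height of Y is minimal, say
   |Y_t| = m, and let v be the ancestor of Y_n1 at height m + l.  On the event, v is
   also an ancestor of Y_n2 and t < n2, so after time t the walk stays strictly above
   height m and at time n2 it lies in the subtree of v.  From a vertex z of height m
   such an excursion has probability at most (lam - 1) / (lam^l - 1): the function
   y |-> lam^k(y) - 1, where k(y) is the number of levels above m that y shares with
   the path to v, is superharmonic for the walk killed at height m (on that path it is
   the gambler's-ruin function of a lam-biased walk on Z), equals lam^l - 1 below v and
   is at most lam - 1 at the children of z.  The Markov property at time t and a union
   bound over the n2 - n1 possible values of t give the claim.  Path probabilities are
   summed over finitely many vertices at a time, and the bound passes to the limit by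
   continuity of the measure. *)

From HB Require Import structures.
From mathcomp Require Import all_boot all_order all_algebra.
From mathcomp Require Import all_classical all_reals all_analysis.
From mathcomp Require Import zify ring lra.
Import Order.TTheory GRing.Theory Num.Theory.
Set Implicit Arguments. Unset Strict Implicit. Unset Printing Implicit Defensive.

Lemma lcpC (x y : vertex) : lcp x y = lcp y x.
Proof. by elim: x y => [|a x IH] [|b y] //=; rewrite eq_sym IH; case: (eqVneq a b) => // ->. Qed.

Lemma size_lcpl (x y : vertex) : (size (lcp x y) <= size x)%N.
Proof. by elim: x y => [|a x IH] [|b y] //=; case: ifP => //= _; exact: IH. Qed.

Lemma size_lcpr (x y : vertex) : (size (lcp x y) <= size y)%N.
Proof. by rewrite lcpC size_lcpl. Qed.

Lemma take_lcp (x y : vertex) k : (k <= size (lcp x y))%N -> take k x = take k y.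
Proof.
elim: x y k => [|a x IH] [|b y] [|k] //=; case: ifP => //= /eqP -> hk.
by rewrite (IH y k).
Qed.

Lemma lcp_prefix (v z : vertex) : prefix v z -> lcp z v = v.
Proof. by elim: z v => [|b z IH] [|a v] //= /andP[/eqP -> /IH ->]; rewrite eqxx. Qed.

Lemma lcp_take (x v : vertex) k : lcp (take k x) v = take k (lcp x v).
Proof. by elim: x v k => [|a x IH] [|b v] [|k] //=; case: ifP => //= _; rewrite IH. Qed.

Lemma lcp_rcons (x v : vertex) i :
  (size (lcp x v) < size x)%N -> lcp (rcons x i) v = lcp x v.
Proof. by elim: x v => [|a x IH] [|b v] //=; case: ifP => //= _ /IH ->. Qed.

Lemma size_lcp_rcons (x v : vertex) i :
  (size (lcp (rcons x i) v) <= size x + (i == nth 0%N v (size x)))%N.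
Proof.
elim: x v => [|a x IH] [|b v] //=; first by case: ifP.
by case: ifP => //= _; rewrite addSn ltnS.
Qed.

(** * The last time of minimal height *)

Lemma geq_bigminn_seq (F : nat -> nat) x0 (r : seq nat) j : j \in r ->
  (\big[minn/x0]_(i <- r) F i <= F j)%N.
Proof.
elim: r => // i r IH; rewrite inE big_cons => /predU1P [-> | /IH].
  exact: geq_minl.
exact: leq_trans (geq_minr _ _).
Qed.

Lemma bigminn_attained_seq (F : nat -> nat) x0 (r : seq nat) :
  \big[minn/x0]_(i <- r) F i = x0 \/ exists2 i, i \in r & \big[minn/x0]_(i <- r) F i = F i.
Proof.
rewrite big_seq; elim/big_ind: _ => [|a b Pa Pb|i]; [by left | | by right; exists i].
by rewrite /minn; case: ltnP.
Qed.

Definition dips_below_lca (f : nat -> vertex) (l n1 n2 : nat) : bool :=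
  (2 * l + dgr (f n1) (f n2) + 2 * \big[minn/size (f n1)]_(n1 <= n < n2.+1) size (f n)
    <= size (f n1) + size (f n2))%N.

Lemma eq_dips_below_lca f g l n1 n2 : (n1 <= n2)%N -> (forall i, (i <= n2)%N -> f i = g i) ->
  dips_below_lca f l n1 n2 = dips_below_lca g l n1 n2.
Proof.
move=> le_n12 fg; rewrite /dips_below_lca !fg //; congr (_ + _ * _ <= _)%N.
by apply: eq_big_nat => i /andP [_]; rewrite ltnS => /fg ->.
Qed.

Definition climb_after (f : nat -> vertex) (l n1 n2 n : nat) : bool :=
  [&& size (f n) + l <= size (f n1),
      all (fun j => size (f n) < size (f j)) (iota n.+1 (n2 - n))
    & prefix (take (size (f n) + l) (f n1)) (f n2)]%N.

Lemma dips_below_lca_climb f l n1 n2 : (0 < l)%N -> (n1 < n2)%N ->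
  dips_below_lca f l n1 n2 -> exists2 n, (n1 <= n < n2)%N & climb_after f l n1 n2 n.
Proof.
rewrite /dips_below_lca; set m := \big[minn/_]_(_ <= _ < _) _ => l_gt0 lt_n12 dip.
have m_le i : (n1 <= i <= n2)%N -> (m <= size (f i))%N.
  by move=> i_in; apply: geq_bigminn_seq; rewrite mem_index_iota ltnS.
have m_attained : exists t, (n1 <= t <= n2)%N && (size (f t) <= m)%N.
  move: (bigminn_attained_seq (fun n => size (f n)) (size (f n1)) (index_iota n1 n2.+1)).
  rewrite -/m => -[-> | [t]]; first by exists n1; rewrite !leqnn ltnW.
  by rewrite mem_index_iota ltnS => t_in ->; exists t; rewrite t_in leqnn.
have t_le t : (n1 <= t <= n2)%N && (size (f t) <= m)%N -> (t <= n2)%N by case/andP => /andP [].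
have [t /andP [t_in t_min] t_last] := ex_maxnP m_attained t_le.
have size_t : size (f t) = m by apply/eqP; rewrite eqn_leq t_min m_le.
have lcp_ge : (m + l <= size (lcp (f n1) (f n2)))%N.
  by move: dip; rewrite /dgr; have := size_lcpl (f n1) (f n2); have := size_lcpr (f n1) (f n2); lia.
have lt_tn2 : (t < n2)%N.
  rewrite ltn_neqAle (proj2 (andP t_in)) andbT; apply/eqP => eq_t.
  by move: size_t; rewrite eq_t; have := size_lcpr (f n1) (f n2); lia.
exists t; first by lia.
rewrite /climb_after size_t; apply/and3P; split.
- by have := size_lcpl (f n1) (f n2); lia.
- apply/allP => j; rewrite mem_iota => j_in; rewrite ltnNge; apply/negP => le_jm.
  by have := t_last j; rewrite le_jm andbT; lia.
- by rewrite (take_lcp lcp_ge) prefix_take.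
Qed.

Definition excursion_to (h : nat) (v z : vertex) (b : seq vertex) : bool :=
  all (fun y => h < size y)%N b && prefix v (last z b).

Lemma climb_after_cat x a b l n1 n2 n :
  size a = n -> size b = (n2 - n)%N -> (n1 <= n < n2)%N ->
  climb_after (nth [::] ((x :: a) ++ b)) l n1 n2 n =
  (size (last x a) + l <= size (nth [::] (x :: a) n1))%N &&
  excursion_to (size (last x a)) (take (size (last x a) + l) (nth [::] (x :: a) n1)) (last x a) b.
Proof.
move=> size_a size_b n_in.
have nth_n : nth [::] ((x :: a) ++ b) n = last x a.
  by rewrite nth_cat /= ltnS size_a leqnn (last_nth [::]) size_a.
have nth_n1 : nth [::] ((x :: a) ++ b) n1 = nth [::] (x :: a) n1.
  by rewrite nth_cat /= ltnS size_a; case: ifP => //; lia.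
have nth_n2 : nth [::] ((x :: a) ++ b) n2 = last (last x a) b.
  have size_ab : size ((x :: a) ++ b) = n2.+1 by rewrite size_cat /= size_a size_b; lia.
  by rewrite -[n2]/(n2.+1.-1) -size_ab nth_last last_cat.
have after_n : [seq nth [::] ((x :: a) ++ b) j | j <- iota n.+1 (n2 - n)] = b.
  rewrite map_nth_iota; last by rewrite size_cat /= size_a size_b; lia.
  by rewrite drop_size_cat /= ?size_a // take_oversize ?size_b.
rewrite /climb_after /excursion_to nth_n nth_n1 nth_n2; congr [&& _, _ & _].
by rewrite -{2}after_n all_map.
Qed.

Fixpoint words (T : Type) (S : seq T) (k : nat) : seq (seq T) :=
  if k is k'.+1 then [seq y :: b | y <- S, b <- words S k'] else [:: [::]].

Lemma mem_words (T : eqType) (S : seq T) k s :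
  (s \in words S k) = (size s == k) && all (mem S) s.
Proof.
elim: k s => [|k IH] s /=; first by rewrite mem_seq1; case: s.
apply/allpairsP/idP => [[[y b] /= [yS + ->]] | ].
  by rewrite IH /= eqSS yS => /andP [-> ->].
case: s => [|y b] //=; rewrite eqSS => /and3P [size_b yS bS].
by exists (y, b); rewrite /= IH size_b.
Qed.

Lemma words_uniq (T : eqType) (S : seq T) k : uniq S -> uniq (words S k).
Proof.
by move=> uS; elim: k => //= k IH; apply: allpairs_uniq => // -[y b] [y' b'] _ _ /= [-> ->].
Qed.

Local Open Scope ring_scope.

Lemma big_words_cat (V : nmodType) (T : Type) (S : seq T) m k (g : seq T -> V) :
  \sum_(s <- words S (m + k)) g s = \sum_(a <- words S m) \sum_(b <- words S k) g (a ++ b).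
Proof.
elim: m g => [|m IH] g; first by rewrite big_seq1.
by rewrite addSn /= !big_allpairs_dep; apply: eq_bigr => y _; exact: (IH (fun s => g (y :: s))).
Qed.

Definition neighbours (c : vertex -> nat) (x : vertex) : seq vertex :=
  parent x :: [seq rcons x i | i <- iota 0 (c x)].

Lemma size_parent (x : vertex) : size (parent x) = (size x).-1.
Proof. by rewrite /parent size_takel // leq_pred. Qed.

Lemma is_child_rcons c (x : vertex) i : (i < c x)%N -> is_child c x (rcons x i).
Proof. by move=> lt_ic; rewrite /is_child size_rcons -cats1 take_size_cat ?last_cat ?eqxx. Qed.

Lemma is_child_parent c (x : vertex) : is_child c x (parent x) = false.
Proof. by rewrite /is_child size_parent (_ : (_ == _) = false) //; apply/eqP; lia. Qed.

Lemma is_child_neighbours c (x y : vertex) : is_child c x y -> y \in neighbours c x.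
Proof.
case/lastP: y => [|y a]; first by case/and3P.
rewrite /is_child size_rcons last_rcons eqSS -cats1 => /and3P [/eqP <- /eqP].
rewrite take_size_cat // => -> lt_ac; rewrite inE cats1; apply/orP; right.
by apply: map_f; rewrite mem_iota.
Qed.

Lemma neighbours_uniq c (x : vertex) : uniq (neighbours c x).
Proof.
rewrite /= map_inj_uniq ?iota_uniq ?andbT; last exact: rcons_injr.
apply/negP => /mapP [i _ /(congr1 size)/eqP]; rewrite size_parent size_rcons.
by case: (size x) => // n; rewrite ltn_eqF.
Qed.

Lemma size_neighbours c (x y : vertex) : y \in neighbours c x -> (size y <= (size x).+1)%N.
Proof.
rewrite inE => /predU1P [-> | /mapP [i _ ->]]; last by rewrite size_rcons.
by rewrite size_parent; lia.
Qed.

Lemma sumr_const_iota (V : nmodType) k (a : V) : \sum_(i <- iota 0 k) a = a *+ k.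
Proof. by rewrite big_const_seq count_predT size_iota; elim: k => //= k ->; rewrite mulrS. Qed.

Lemma ler_sum_supp (R : numDomainType) (T : eqType) (S S' : seq T) (f : T -> R) :
  uniq S -> uniq S' -> (forall y, y \notin S' -> f y = 0) -> (forall y, 0 <= f y) ->
  \sum_(y <- S) f y <= \sum_(y <- S') f y.
Proof.
move=> uS uS' f0 f_ge0; set S0 := [seq y <- S | y \in S'].
have -> : \sum_(y <- S) f y = \sum_(y <- S0) f y.
  by rewrite big_filter [RHS]big_mkcond; apply: eq_bigr => y _; case: ifPn => // /f0.
rewrite [X in _ <= X](bigID (mem S0)) /= -[X in _ <= X + _]big_filter.
rewrite [X in _ <= X + _](perm_big S0); first by rewrite lerDl sumr_ge0.
apply: uniq_perm; rewrite ?filter_uniq // => y.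
by rewrite !mem_filter; case: (y \in S'); rewrite ?andbT ?andbF.
Qed.

Section BiasedWalk.
Variables (R : realType) (c : vertex -> nat) (lam : R).
Hypothesis lam_gt1 : 1 < lam.

Lemma lbrw_den_gt0 x : 0 < lam + (c x)%:R.
Proof. by apply: ltr_wpDr; rewrite ?ler0n // (lt_trans ltr01). Qed.

Lemma lbrw_p_ge0 x y : 0 <= lbrw_p c lam x y.
Proof.
have := lbrw_den_gt0 x; rewrite /lbrw_p => den_gt0.
case: ifP => _; first by case: ifP => _; rewrite ?invr_ge0.
case: ifP => _; first by rewrite invr_ge0 ltW.
case: ifP => _ //; rewrite divr_ge0 ?ltW // (lt_trans ltr01) //.
Qed.

Lemma lbrw_p_child x i : x != [::] -> (i < c x)%N ->
  lbrw_p c lam x (rcons x i) = (lam + (c x)%:R)^-1.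
Proof. by move=> /negbTE x_neq0 lt_ic; rewrite /lbrw_p x_neq0 is_child_rcons. Qed.

Lemma lbrw_p_parent x : x != [::] -> lbrw_p c lam x (parent x) = lam / (lam + (c x)%:R).
Proof. by move=> /negbTE x_neq0; rewrite /lbrw_p x_neq0 is_child_parent eqxx. Qed.

Lemma lbrw_p_neighbours x y : lbrw_p c lam x y != 0 -> y \in neighbours c x.
Proof.
rewrite /lbrw_p; case: ifP => _; first by case: ifP => [/is_child_neighbours|]; rewrite ?eqxx.
case: ifP => [/is_child_neighbours //|_].
by case: ifP => [/eqP -> _|]; rewrite ?mem_head ?eqxx.
Qed.

Lemma sum_lbrw_p_neighbours x : \sum_(y <- neighbours c x) lbrw_p c lam x y <= 1.
Proof.
rewrite big_cons big_map.
have [-> | x_neq0] := eqVneq x [::].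
  rewrite /lbrw_p eqxx is_child_parent add0r.
  rewrite (eq_big_seq (fun _ => (c [::])%:R^-1)) => [|i]; last first.
    by rewrite mem_iota => lt_ic; rewrite is_child_rcons.
  rewrite sumr_const_iota; case: (c [::]) => [|n]; first by rewrite mulr0n.
  by rewrite -(mulr_natr (n.+1%:R^-1)) mulVf.
rewrite (eq_big_seq (fun _ => (lam + (c x)%:R)^-1)) => [|i]; last first.
  by rewrite mem_iota => lt_ic; rewrite lbrw_p_child.
rewrite sumr_const_iota lbrw_p_parent // -(mulr_natr ((lam + (c x)%:R)^-1)).
by rewrite [_^-1 * _]mulrC -mulrDl mulfV ?gt_eqF ?lbrw_den_gt0.
Qed.

Lemma sum_lbrw_p_le1 (S : seq vertex) x : uniq S -> \sum_(y <- S) lbrw_p c lam x y <= 1.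
Proof.
move=> uS; apply: le_trans (sum_lbrw_p_neighbours x).
apply: ler_sum_supp => //; [exact: neighbours_uniq | | exact: lbrw_p_ge0].
by move=> y; apply: contraNeq; apply: lbrw_p_neighbours.
Qed.

(** * A superharmonic function *)

(* Truncated subtraction: the potential is 0 unless y and v share more than h letters. *)
Definition ray_pot (h : nat) (v y : vertex) : R :=
  lam ^+ (size (lcp y v) - h) - 1.

Lemma ler_expr_sub1 j k : (j <= k)%N -> lam ^+ j - 1 <= lam ^+ k - 1.
Proof. by move=> le_jk; rewrite lerB // ler_eXn2l. Qed.

Lemma expr_sub1_ge0 j : 0 <= lam ^+ j - 1.
Proof. by rewrite subr_ge0 exprn_ege1 // ltW. Qed.

Lemma ray_pot_ge0 h v y : 0 <= ray_pot h v y.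
Proof. exact: expr_sub1_ge0. Qed.

Lemma sum_ray_pot_children h v x n : (h <= size x)%N ->
  \sum_(i <- iota 0 n) ray_pot h v (rcons x i) <=
  (lam ^+ (size x - h) - 1) *+ n + (lam ^+ (size x - h).+1 - lam ^+ (size x - h)).
Proof.
move=> le_hx; set j := (size x - h)%N; set d := lam ^+ j.+1 - lam ^+ j.
have child_le i : ray_pot h v (rcons x i) <= lam ^+ j - 1 + (i == nth 0%N v (size x))%:R * d.
  have := size_lcp_rcons x v i; case: eqP => _ /= le_lcp.
    rewrite mul1r (_ : _ + d = lam ^+ j.+1 - 1); last by rewrite /d; ring.
    by apply: ler_expr_sub1; rewrite /j; lia.
  by rewrite mul0r addr0; apply: ler_expr_sub1; rewrite /j; lia.
apply: le_trans (ler_sum _ (fun i _ => child_le i)) _.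
rewrite big_split /= sumr_const_iota lerD2l -mulr_suml ler_piMl //.
  by rewrite subr_ge0 ler_eXn2l.
by rewrite -natr_sum -big_mkcond sum1_count count_uniq_mem ?iota_uniq // lern1 leq_b1.
Qed.

Lemma ray_pot_superharmonic h v x : (h < size x)%N ->
  \sum_(y <- neighbours c x) lbrw_p c lam x y * ray_pot h v y <= ray_pot h v x.
Proof.
move=> lt_hx; have x_neq0 : x != [::] by case: x lt_hx.
have size_lcp_parent : size (lcp (parent x) v) = minn (size x).-1 (size (lcp x v)).
  by rewrite lcp_take size_take_min.
have [off_ray | on_ray] := ltnP (size (lcp x v)) (size x).
  apply: le_trans (_ : (\sum_(y <- neighbours c x) lbrw_p c lam x y) * ray_pot h v x <= _).
    rewrite mulr_suml !big_cons !big_map.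
    apply: lerD; last apply: ler_sum => i _; rewrite ler_wpM2l ?lbrw_p_ge0 //.
      by apply/ler_expr_sub1/leq_sub2r; rewrite size_lcp_parent geq_minr.
    by apply/ler_expr_sub1/leq_sub2r; rewrite lcp_rcons.
  by rewrite ler_piMl ?ray_pot_ge0 ?sum_lbrw_p_neighbours.
have eq_lcp : size (lcp x v) = size x by apply/eqP; rewrite eqn_leq size_lcpl.
have [j ej] : exists j, (size x - h = j.+1)%N by exists (size x - h).-1; lia.
have parent_le : ray_pot h v (parent x) <= lam ^+ j - 1.
  by apply: ler_expr_sub1; rewrite size_lcp_parent; lia.
have := sum_ray_pot_children v (c x) (ltnW lt_hx); rewrite ej => children_le.
set q := (lam + (c x)%:R)^-1; have q_ge0 : 0 <= q by rewrite invr_ge0 ltW ?lbrw_den_gt0.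
rewrite big_cons big_map lbrw_p_parent // (eq_big_seq (fun i => q * ray_pot h v (rcons x i))).
  rewrite -mulr_sumr.
  apply: le_trans (lerD (ler_wpM2l _ parent_le) (ler_wpM2l q_ge0 children_le)) _.
    by rewrite divr_ge0 ?ltW ?lbrw_den_gt0 // (lt_trans ltr01).
  (* harmonic along the ray: lam (lam^j - 1) + (lam^j.+2 - lam^j.+1) = lam (lam^j.+1 - 1) *)
  rewrite /ray_pot eq_lcp ej -(mulr_natr (lam ^+ j.+1 - 1)) /q !exprS.
  rewrite le_eqVlt; apply/orP; left; apply/eqP; field.
  by rewrite gt_eqF ?lbrw_den_gt0.
by move=> i; rewrite mem_iota => lt_ic; rewrite lbrw_p_child.
Qed.

Fixpoint path_wt (x : vertex) (t : seq vertex) : R :=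
  if t is y :: t' then lbrw_p c lam x y * path_wt y t' else 1.

Lemma path_wt_ge0 x t : 0 <= path_wt x t.
Proof. by elim: t x => [|y t IH] x //=; rewrite mulr_ge0 ?lbrw_p_ge0. Qed.

Lemma path_wt_cat x a b : path_wt x (a ++ b) = path_wt x a * path_wt (last x a) b.
Proof. by elim: a x => [|y a IH] x /=; rewrite ?mul1r // IH mulrA. Qed.

Lemma prod_lbrw_p_path_wt x0 xs :
  \prod_(i < size xs) lbrw_p c lam (nth x0 (x0 :: xs) i) (nth x0 xs i) = path_wt x0 xs.
Proof.
elim: xs x0 => [|y xs IH] x0 /=; first by rewrite big_ord0.
rewrite big_ord_recl -(IH y); congr (_ * _); apply: eq_bigr => i _ /=.
rewrite add0n; congr lbrw_p; apply: set_nth_default; [exact: ltnW (ltn_ord i) | exact: ltn_ord].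
Qed.

Definition reach_wt (S : seq vertex) (h : nat) (v : vertex) (k : nat) (z : vertex) : R :=
  \sum_(b <- words S k) path_wt z b * (excursion_to h v z b)%:R.

Lemma reach_wt_rec S h v k z : reach_wt S h v k.+1 z =
  \sum_(y <- S) lbrw_p c lam z y * ((h < size y)%N%:R * reach_wt S h v k y).
Proof.
rewrite /reach_wt /= big_allpairs_dep; apply: eq_bigr => y _.
rewrite !mulr_sumr; apply: eq_bigr => b _.
by rewrite /excursion_to /= -andbA; case: (h < size y)%N; rewrite ?mul1r ?mul0r ?mulr0 ?mulrA.
Qed.

Lemma reach_wt_le_ray_pot S h v k z : uniq S -> (h < size z)%N ->
  reach_wt S h v k z * (lam ^+ (size v - h) - 1) <= ray_pot h v z.
Proof.
move=> uS; elim: k z => [|k IH] z lt_hz.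
  rewrite /reach_wt big_seq1 /= mul1r /excursion_to /=.
  case: (boolP (prefix v z)) => [/lcp_prefix v_pref | _]; last by rewrite mul0r ray_pot_ge0.
  by rewrite mul1r /ray_pot v_pref.
rewrite reach_wt_rec mulr_suml.
apply: le_trans (_ : \sum_(y <- S) lbrw_p c lam z y * ray_pot h v y <= _).
  apply: ler_sum => y _; rewrite -mulrA ler_wpM2l ?lbrw_p_ge0 //.
  case: ltnP => [/IH | _]; first by rewrite mul1r.
  by rewrite mul0r mul0r ray_pot_ge0.
apply: le_trans (ray_pot_superharmonic v lt_hz).
apply: ler_sum_supp => //; [exact: neighbours_uniq | move=> y y_notin | move=> y].
  suff -> : lbrw_p c lam z y = 0 by rewrite mul0r.
  by apply: contraNeq y_notin; apply: lbrw_p_neighbours.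
by rewrite mulr_ge0 ?lbrw_p_ge0 ?ray_pot_ge0.
Qed.

Lemma reach_wt_start S v k z : uniq S ->
  reach_wt S (size z) v k.+1 z * (lam ^+ (size v - size z) - 1) <= lam - 1.
Proof.
move=> uS; rewrite reach_wt_rec mulr_suml.
apply: le_trans (_ : \sum_(y <- S) lbrw_p c lam z y * (lam - 1) <= _); last first.
  by rewrite -mulr_suml ler_piMl ?sum_lbrw_p_le1 // subr_ge0 ltW.
apply: ler_sum => y _; rewrite -mulrA.
have [-> | /lbrw_p_neighbours /size_neighbours le_yz] := eqVneq (lbrw_p c lam z y) 0.
  by rewrite !mul0r.
rewrite ler_wpM2l ?lbrw_p_ge0 //; case: ltnP => [lt_zy | _]; last first.
  by rewrite !mul0r subr_ge0 ltW.
rewrite mul1r (le_trans (reach_wt_le_ray_pot v k uS lt_zy)) // -[lam in X in _ <= X]expr1.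
by apply: ler_expr_sub1; have := size_lcpl y v; lia.
Qed.

Section InitialLaw.
Variable mu0 : vertex -> R.
Hypothesis mu0_ge0 : forall x, 0 <= mu0 x.

Definition path_weight (s : seq vertex) : R :=
  if s is x :: t then mu0 x * path_wt x t else 0.

Lemma path_weight_ge0 s : 0 <= path_weight s.
Proof. by case: s => [|x t] //=; rewrite mulr_ge0 ?path_wt_ge0. Qed.

Lemma sum_climb_after_le S l n1 n2 n : uniq S -> (n1 <= n < n2)%N ->
  \sum_(a <- words S n.+1) path_weight a <= 1 ->
  \sum_(s <- words S n2.+1)
     (climb_after (nth [::] s) l n1 n2 n)%:R * path_weight s * (lam ^+ l - 1) <= lam - 1.
Proof.
move=> uS n_in mass_le1.
(* Markov property at time n: split each path after its first n.+1 vertices. *)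
rewrite (_ : n2.+1 = n.+1 + (n2 - n))%N; last by lia.
rewrite big_words_cat.
apply: le_trans (_ : \sum_(a <- words S n.+1) path_weight a * (lam - 1) <= _); last first.
  by rewrite -mulr_suml ler_piMl // subr_ge0 ltW.
rewrite big_seq [X in _ <= X]big_seq; apply: ler_sum => -[|x a]; rewrite mem_words //.
case/andP => /eqP [size_a] _; set z := last x a; set x1 := nth [::] (x :: a) n1.
set v := take (size z + l) x1.
have -> : \sum_(b <- words S (n2 - n)) (climb_after (nth [::] ((x :: a) ++ b)) l n1 n2 n)%:R *
    path_weight ((x :: a) ++ b) * (lam ^+ l - 1) =
    (size z + l <= size x1)%N%:R * path_weight (x :: a) *
    (reach_wt S (size z) v (n2 - n) z * (lam ^+ l - 1)).
  rewrite /reach_wt !mulr_suml mulr_sumr big_seq [RHS]big_seq; apply: eq_bigr => b.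
  rewrite mem_words => /andP [/eqP size_b _].
  by rewrite climb_after_cat // -mulnb natrM /= path_wt_cat; ring.
case: leqP => [le_x1 | _]; last by rewrite !mul0r mulr_ge0 ?path_weight_ge0 // subr_ge0 ltW.
rewrite mul1r ler_wpM2l ?path_weight_ge0 // (_ : (n2 - n = (n2 - n).-1.+1)%N); last by lia.
by have := reach_wt_start v (n2 - n).-1 z uS; rewrite /v size_takel // addKn; apply.
Qed.

Lemma sum_dips_below_lca_le S l n1 n2 : uniq S -> (n1 < n2)%N ->
  (forall n, \sum_(a <- words S n.+1) path_weight a <= 1) ->
  \sum_(s <- words S n2.+1)
     (dips_below_lca (nth [::] s) l n1 n2)%:R * path_weight s * (lam ^+ l - 1)
  <= (n2 - n1)%:R * (lam - 1).
Proof.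
move=> uS lt_n12 mass_le1.
have term_ge0 (b : bool) s : 0 <= b%:R * path_weight s * (lam ^+ l - 1).
  by rewrite !mulr_ge0 ?path_weight_ge0 ?expr_sub1_ge0.
have [-> | l_gt0] := posnP l.
  rewrite big1 => [|s _]; last by rewrite expr0 subrr mulr0.
  by rewrite mulr_ge0 // subr_ge0 ltW.
apply: le_trans (_ : \sum_(s <- words S n2.+1) \sum_(n1 <= n < n2)
    (climb_after (nth [::] s) l n1 n2 n)%:R * path_weight s * (lam ^+ l - 1) <= _).
  apply: ler_sum => s _; have [dip | _] := boolP (dips_below_lca _ _ _ _); last first.
    by rewrite !mul0r sumr_ge0 // => n _; apply: term_ge0.
  have [n n_in climb] := dips_below_lca_climb l_gt0 lt_n12 dip.
  rewrite (bigD1_seq n) ?mem_index_iota ?iota_uniq //= climb lerDl.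
  by apply: sumr_ge0 => i _; apply: term_ge0.
rewrite exchange_big [X in _ <= X]mulr_natl -[X in _ <= X]sumr_const_nat.
by apply: ler_sum_nat => n n_in; apply: sum_climb_after_le.
Qed.

End InitialLaw.

End BiasedWalk.

Local Open Scope classical_set_scope.

Lemma le_measure_bigcup_nondecreasing d (T : measurableType d) (R : realType)
    (mu : {measure set T -> \bar R}) (A : nat -> set T) (b : \bar R) :
  (forall n, measurable (A n)) -> {homo A : n m / (n <= m)%N >-> (n <= m)%O} ->
  (forall n, mu (A n) <= b)%E -> (mu (\bigcup_n A n) <= b)%E.
Proof.
move=> A_meas A_mono A_le.
apply: cvge_to_le (nondecreasing_cvg_mu A_meas (bigcupT_measurable _ A_meas) A_mono) _.
exact: nearW.
Qed.

Definition box (M : nat) : seq vertex :=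
  undup (flatten [seq words (iota 0 M) k | k <- iota 0 M.+1]).

Lemma box_uniq M : uniq (box M).
Proof. exact: undup_uniq. Qed.

Lemma mem_box M x : (x \in box M) = (size x <= M)%N && all (fun i => i < M)%N x.
Proof.
rewrite mem_undup; apply/flatten_mapP/andP => [[k] | [size_x lt_xM]].
  rewrite mem_iota mem_words => k_le /andP [/eqP size_x x_in]; split; first by lia.
  by apply: sub_all x_in => i; rewrite inE mem_iota.
exists (size x); first by rewrite mem_iota; lia.
by rewrite mem_words eqxx; apply: sub_all lt_xM => i; rewrite inE mem_iota.
Qed.

Lemma sub_box M M' : (M <= M')%N -> {subset box M <= box M'}.
Proof.
move=> le_MM' x; rewrite !mem_box => /andP [size_x lt_xM].
by rewrite (leq_trans size_x) //; apply: sub_all lt_xM => i /leq_trans; apply.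
Qed.

Lemma exists_box (t : seq vertex) : exists M, all (mem (box M)) t.
Proof.
elim: t => [|x t [M t_in]]; first by exists 0%N.
exists (maxn M (maxn (size x) (\max_(i <- x) i).+1)); rewrite /= mem_box -andbA; apply/and3P; split.
- by rewrite !leq_max leqnn orbT.
- apply/allP => i /(@leq_bigmax_seq _ x xpredT id i) /(_ erefl) le_i.
  by rewrite !leq_max ltnS le_i !orbT.
- by apply: sub_all t_in => y; apply: sub_box; exact: leq_maxl.
Qed.

Lemma preimage_mem_cons (T : Type) (U : eqType) (f : T -> U) (s : U) (L : seq U) :
  [set w | f w \in s :: L] = [set w | f w = s] `|` [set w | f w \in L].
Proof.
apply/seteqP; split => w /=; rewrite inE; first by case/predU1P; [left | right].
by case=> [->|->]; rewrite ?eqxx ?orbT.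
Qed.

Section FinitePreimage.
Context d (T : measurableType d) (U : eqType) (f : T -> U).
Hypothesis f_meas : forall s, measurable [set w | f w = s].

Lemma measurable_preimage_mem (L : seq U) : measurable [set w | f w \in L].
Proof.
elim: L => [|s L IH]; first by rewrite (_ : [set _ | _] = set0) //; apply/seteqP; split.
by rewrite preimage_mem_cons; apply: measurableU.
Qed.

Lemma measure_preimage_mem (R : realType) (mu : {measure set T -> \bar R}) (L : seq U) :
  uniq L -> mu [set w | f w \in L] = (\sum_(s <- L) mu [set w | f w = s])%E.
Proof.
elim: L => [_ | s L IH /andP [s_notin uL]].
  by rewrite big_nil (_ : [set _ | _] = set0) ?measure0 //; apply/seteqP; split.
rewrite preimage_mem_cons big_cons -(IH uL).
apply: measureU => //; first exact: measurable_preimage_mem.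
by apply/seteqP; split => // w /= [->]; rewrite (negbTE s_notin).
Qed.

End FinitePreimage.

Definition traj (Omega : Type) (Y : nat -> Omega -> vertex) (k : nat) (w : Omega) : seq vertex :=
  mkseq (Y^~ w) k.

Lemma measurable_traj_eq d (Omega : measurableType d) (Y : nat -> Omega -> vertex) :
  (forall n x, measurable (Y n @^-1` [set x])) -> forall k s, measurable [set w | traj Y k w = s].
Proof.
move=> Y_meas; elim=> [|k IH] s.
  case: s => [|x s].
    by rewrite (_ : [set _ | _] = setT) //; apply/seteqP; split.
  by rewrite (_ : [set _ | _] = set0) //; apply/seteqP; split.
case/lastP: s => [|s x].
  by rewrite (_ : [set _ | _] = set0) //; apply/seteqP; split => // w.
rewrite (_ : [set _ | _] = [set w | traj Y k w = s] `&` Y k @^-1` [set x]).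
  exact: measurableI.
apply/seteqP; split => w /=; rewrite /traj mkseqS; first by move/rcons_inj => [-> ->].
by case=> -> ->.
Qed.

Definition init_law (R : realType) d (Omega : measurableType d) (P : probability Omega R)
    (Y : nat -> Omega -> vertex) (x : vertex) : R :=
  fine (P [set w | Y 0%N w = x]).

Section LbrwLaw.
Context (R : realType) d (Omega : measurableType d) (P : probability Omega R).
Context (c : vertex -> nat) (lam : R) (Y : nat -> Omega -> vertex).
Hypothesis Y_lbrw : is_lbrw P c lam Y.

Lemma init_law_ge0 x : 0 <= init_law P Y x.
Proof. exact/fine_ge0/measure_ge0. Qed.

Lemma lbrw_traj_eq x xs :
  P [set w | traj Y (size xs).+1 w = x :: xs] = (init_law P Y x * path_wt c lam x xs)%:E.
Proof.
case: Y_lbrw => Y_meas [_ Y_law].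
rewrite (_ : [set _ | _] = [set w | forall i, (i < (size xs).+1)%N -> Y i w = nth x (x :: xs) i]).
  rewrite Y_law prod_lbrw_p_path_wt EFinM fineK //.
  exact: fin_num_measure _ _ (Y_meas 0%N x).
apply/seteqP; split => w /=; first by move=> <- i lt_i; rewrite nth_mkseq.
move=> Yw; apply: (@eq_from_nth _ x); rewrite size_mkseq // => i lt_i.
by rewrite nth_mkseq // Yw.
Qed.

Lemma lbrw_traj_in k (L : seq (seq vertex)) : uniq L -> all (fun s => size s == k.+1) L ->
  P [set w | traj Y k.+1 w \in L] = (\sum_(s <- L) path_weight c lam (init_law P Y) s)%:E.
Proof.
move=> uL size_L; rewrite (measure_preimage_mem (measurable_traj_eq Y_lbrw.1 k.+1)) //.
rewrite -sumEFin; apply: eq_big_seq => -[|x xs] /(allP size_L) //= /eqP [<-].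
exact: lbrw_traj_eq.
Qed.

Lemma lbrw_words_mass_le1 S n : uniq S ->
  \sum_(a <- words S n.+1) path_weight c lam (init_law P Y) a <= 1.
Proof.
move=> uS; rewrite -lee_fin -(lbrw_traj_in (k := n)) ?words_uniq //.
  exact/probability_le1/measurable_preimage_mem/measurable_traj_eq/Y_lbrw.1.
by apply/allP => s; rewrite mem_words => /andP [].
Qed.

Hypothesis lam_gt1 : 1 < lam.

Lemma lbrw_dips_le S l n1 n2 : uniq S -> (n1 < n2)%N ->
  (P [set w | traj Y n2.+1 w \in [seq s <- words S n2.+1 | dips_below_lca (nth [::] s) l n1 n2]]
   * (lam ^+ l - 1)%:E <= ((n2 - n1)%:R * (lam - 1))%:E)%E.
Proof.
move=> uS lt_n12; rewrite lbrw_traj_in ?filter_uniq ?words_uniq //; last first.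
  by apply/allP => s; rewrite mem_filter mem_words => /and3P [].
rewrite -EFinM lee_fin big_filter big_mkcond mulr_suml.
under eq_bigr => s _ do rewrite -mulrb -mulr_natl.
apply: sum_dips_below_lca_le => //; [exact: init_law_ge0 | move=> n; exact: lbrw_words_mass_le1].
Qed.

End LbrwLaw.

Theorem lemma3p17 (R : realType) (d : measure_display) (Omega : measurableType d)
  (P : probability Omega R) (c : vertex -> nat) (lam : R)
  (Y : nat -> Omega -> vertex) :
  infinite_tree c -> 1 < lam -> is_lbrw P c lam Y -> recurrent P Y ->
  forall (l n1 n2 : nat), (n1 < n2)%N ->
  (P [set w : Omega | (2 * l + dgr (Y n1 w) (Y n2 w) + 2 * min_height Y n1 n2 w
               <= size (Y n1 w) + size (Y n2 w))%N]
   * (lam ^+ l - 1)%:E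
   <= ((n2 - n1)%:R * (lam - 1))%:E)%E.
Proof.
move=> _ lam_gt1 Y_lbrw _ l n1 n2 lt_n12.
have [-> | l_gt0] := posnP l.
  by rewrite subrr mule0 lee_fin mulr_ge0 // subr_ge0 ltW.
have den_gt0 : 0 < lam ^+ l - 1 by rewrite subr_gt0 exprn_egt1 // -lt0n.
pose dips M := [seq s <- words (box M) n2.+1 | dips_below_lca (nth [::] s) l n1 n2].
pose A M := [set w | traj Y n2.+1 w \in dips M].
have dips_traj w :
    dips_below_lca (nth [::] (traj Y n2.+1 w)) l n1 n2 = dips_below_lca (Y^~ w) l n1 n2.
  by apply: eq_dips_below_lca => [|i le_i]; [exact: ltnW | rewrite nth_mkseq].
change (P [set w | dips_below_lca (Y^~ w) l n1 n2] * (lam ^+ l - 1)%:E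
  <= ((n2 - n1)%:R * (lam - 1))%:E)%E.
have -> : [set w | dips_below_lca (Y^~ w) l n1 n2] = \bigcup_M A M.
  apply/seteqP; split => [w dip | w [M _]]; last by rewrite /A /= mem_filter dips_traj => /andP [].
  have [M traj_in] := exists_box (traj Y n2.+1 w); exists M => //.
  by rewrite /A /= mem_filter mem_words size_mkseq eqxx traj_in dips_traj !andbT.
rewrite -lee_pdivlMr //; apply: le_measure_bigcup_nondecreasing => [M | M M' le_MM' | M].
- exact/measurable_preimage_mem/measurable_traj_eq/Y_lbrw.1.
- rewrite subsetEset => w; rewrite /A /= !mem_filter !mem_words => /and3P [-> -> traj_in] /=.
  by apply: sub_all traj_in => x; apply: sub_box.
- by rewrite lee_pdivlMr //; exact (lbrw_dips_le Y_lbrw lam_gt1 l (box_uniq M) lt_n12).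
Qed.
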